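(* Let $\Delta\in\mathbb F^{m\times m}$ be a connection matrix with column/row partition consisting of two sets $J_0,J_1$. Let $\tilde\Delta^{t^*+1}$ be the last matrix produced by the Revised 1-Block Incremental Sweeping Algorithm applied to $\Delta$, and let $\Delta^m$ be the last matrix produced by the Incremental Sweeping Algorithm (ISA) applied to $\Delta$. Then $\tilde\Delta^{t^*+1}=\Delta^m$, and the sets of positions marked as primary pivots by the two algorithms coincide (hence the primary pivots coincide in position and value).
   Context: Throughout, $\mathbb F$ is a field and $m\ge1$. $A_{\cdot j}$ is the $j$-th column of $A$, $A_{IJ}$ the submatrix with rows in $I$ and columns in $J$. $U^{pq}$ is the $m\times m$ matrix whose only nonzero entry is a $1$ in position $(p,q)$. Superscripts on matrices are indices, not powers. A connection matrix (over $\mathbb F$) is a matrix $\Delta\in\mathbb F^{m\times m}$ together with a partition $\{1,\dots,m\}=J_0\sqcup\cdots\sqcup J_b$ (the column/row partition; the $J_k$ need not consist of consecutive integers) such that $\Delta$ is upper triangular, $\Delta\Delta=0$, and $\Delta_{ij}=0$ unless $i<j$ and $(i,j)\in\bigcup_{k=1}^bJ_{k-1}\times J_k$. For $1\le r\le m-1$ the $r$-th diagonal is $\{(j-r,j):r<j\le m\}$. Incremental Sweeping Algorithm (ISA) applied to a connection matrix $\Delta$: set $\Delta^0=\Delta^1=\Delta$. For $r=1,\dots,m-1$ in turn: (Markup) for every position $(j-r,j)$ on the $r$-th diagonal with $\Delta^r_{j-r,j}\ne0$ such that no position in column $j$ was marked as a primary pivot at an earlier iteration: if some position $(j-r,p)$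 of row $j-r$ was marked as a primary pivot at an earlier iteration, mark $(j-r,j)$ as a change-of-basis pivot of iteration $r$; otherwise mark $(j-r,j)$ permanently as a primary pivot. (Update) Let $T^r=I-\sum \frac{\Delta^r_{j-r,j}}{\Delta^r_{j-r,p}}U^{pj}$, the sum running over all change-of-basis pivots $(j-r,j)$ of iteration $r$, where $(j-r,p)$ is the primary pivot position in row $j-r$; set $\Delta^{r+1}=(T^r)^{-1}\Delta^rT^r$. Revised 1-Block Incremental Sweeping Algorithm (for $b=1$): set $C^1=\{1,\dots,m\}$, $\tilde\Delta^1=\Delta$, $t=1$. While $\tilde\Delta^t_{\cdot C^t}\ne0$: let $i_t=\max\{i:\tilde\Delta^t_{iC^t}\ne0\}$, $j_t=\min\{j\in C^t:\tilde\Delta^t_{i_tj}\ne0\}$; mark $(i_t,j_t)$ as a primary pivot; let $\tilde T^t=I-\sum_{j\in C^t,\,j>j_t}\frac{\tilde\Delta^t_{i_tj}}{\tilde\Delta^t_{i_tj_t}}U^{j_tj}$, $\tilde\Delta^{t+1}=\tilde\Delta^t\tilde T^t$, $C^{t+1}=C^t\setminus\{j_t\}$, $t\leftarrow t+1$. Let $t^*$ be the total number of primary pivots marked. *)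

(* Indices 1..m of the paper are represented by 'I_m (0..m-1);
   the order is preserved, so all comparisons are unchanged. *)
From HB Require Import structures.
From mathcomp Require Import all_boot all_order all_algebra.
Set Implicit Arguments. Unset Strict Implicit. Unset Printing Implicit Defensive.
Import GRing.Theory.
Local Open Scope ring_scope.

Section Defs.
Variables (F : fieldType) (m : nat).

Definition pos := ('I_m * 'I_m)%type.

Definition is_partition2 (J0 J1 : {set 'I_m}) : Prop :=
  J0 :&: J1 = set0 /\ J0 :|: J1 = setT.

Definition connection_matrix1 (D : 'M[F]_m) (J0 J1 : {set 'I_m}) : Prop :=
  is_partition2 J0 J1 /\
  (forall i j : 'I_m, (j < i)%N -> D i j = 0) /\
  D *m D = 0 /\
  (forall i j : 'I_m, D i j != 0 -> [&& (i < j)%N, i \in J0 & j \in J1]).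

(* state: (current matrix Delta^r, set of primary pivots marked so far) *)

Definition prow (P : {set pos}) (i : 'I_m) : 'I_m :=
  odflt i [pick k | (i, k) \in P].

Definition isa_markable (r : nat) (D : 'M[F]_m) (P : {set pos}) (ij : pos) : bool :=
  [&& (val ij.2 == val ij.1 + r)%N, D ij.1 ij.2 != 0 &
      ~~ [exists k, (k, ij.2) \in P]].

Definition isa_primary r D P (ij : pos) : bool :=
  isa_markable r D P ij && ~~ [exists k, (ij.1, k) \in P].

Definition isa_cob r D P (ij : pos) : bool :=
  isa_markable r D P ij && [exists k, (ij.1, k) \in P].

Definition isa_T r (D : 'M[F]_m) (P : {set pos}) : 'M[F]_m :=
  1%:M - \sum_(ij : pos | isa_cob r D P ij)
            (D ij.1 ij.2 / D ij.1 (prow P ij.1)) *: delta_mx (prow P ij.1) ij.2.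

Definition isa_step (st : 'M[F]_m * {set pos}) (r : nat) : 'M[F]_m * {set pos} :=
  let (D, P) := st in
  let T := isa_T r D P in
  (invmx T *m D *m T, P :|: [set ij | isa_primary r D P ij]).

Definition ISA (D : 'M[F]_m) : 'M[F]_m * {set pos} :=
  foldl isa_step (D, set0) (iota 1 m.-1).

(* state: (current matrix tilde Delta^t, C^t, set of primary pivots) *)

Definition rowC (D : 'M[F]_m) (C : {set 'I_m}) (i : 'I_m) : bool :=
  [exists j in C, D i j != 0].

Definition rev_step (st : 'M[F]_m * {set 'I_m} * {set pos})
  : 'M[F]_m * {set 'I_m} * {set pos} :=
  let: (D, C, P) := st in
  match [pick i | rowC D C i && [forall i', rowC D C i' ==> (i' <= i)%N]] with
  | None => st     (* tilde Delta_{. C} = 0 : the loop has stopped *)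
  | Some it =>
    match [pick j | [&& j \in C, D it j != 0 &
             [forall j', ((j' \in C) && (D it j' != 0)) ==> (j <= j')%N]]] with
    | None => st
    | Some jt =>
      let T := 1%:M - \sum_(j in C | (jt < j)%N) (D it j / D it jt) *: delta_mx jt j in
      (D *m T, C :\ jt, P :|: [set (it, jt)])
    end
  end.

(* The loop performs at most m productive steps (C shrinks each time), so
   iterating the (stationary-when-stopped) step m times yields the final state. *)
Definition Revised1 (D : 'M[F]_m) : 'M[F]_m * {set 'I_m} * {set pos} :=
  iter m rev_step (D, setT, set0).

End Defs.

(* Both algorithms transform Delta only by adding multiples of a pivot column
   to a later column, and both end in a reduced form of Delta: every pivot is
   the lowest nonzero entry of its column, no two pivots share a row, columns
   without pivot vanish, and every column is the column of Delta plus a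
   combination of earlier pivot columns, each used only if the column
   vanishes from that pivot's row downward.
   Such a reduced form, pivots included, is unique. *)

From HB Require Import structures.
From mathcomp Require Import all_boot all_order all_algebra.
Set Implicit Arguments. Unset Strict Implicit. Unset Printing Implicit Defensive.
Import GRing.Theory.
Local Open Scope ring_scope.

Section ReducedForm.
Variables (F : fieldType) (m : nat).
Implicit Types (R M : 'M[F]_m) (P : {set pos m}).

Definition vanishes_from R (j i0 : 'I_m) :=
  forall i : 'I_m, (i0 <= i)%N -> R i j = 0.

Definition lowest_entry R (i j : 'I_m) :=
  R i j != 0 /\ forall i' : 'I_m, (i < i')%N -> R i' j = 0.

Definition reduced_col (D R : 'M[F]_m) P (j : 'I_m) :=
  exists2 a : 'I_m -> F,
    forall i, R i j = D i j + \sum_p a p * R i p &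
    forall p, a p != 0 ->
      (p < j)%N /\ exists2 i0, (i0, p) \in P & vanishes_from R j i0.

Record reduced_form (D R : 'M[F]_m) P : Prop := ReducedForm {
  pivot_lowest : forall i j, (i, j) \in P -> lowest_entry R i j;
  pivotless_col0 : forall j, (forall i, (i, j) \notin P) -> forall i, R i j = 0;
  pivot_row_uniq : forall i p j, (i, p) \in P -> (i, j) \in P -> p = j;
  reduced_cols : forall j, reduced_col D R P j }.

Lemma lowest_entry_uniq R i i' j :
  lowest_entry R i j -> lowest_entry R i' j -> i = i'.
Proof.
case=> nz z [nz' z']; case: (ltngtP i i') => [lt|lt|/val_inj //].
  by rewrite z ?eqxx in nz'.
by rewrite z' ?eqxx in nz.
Qed.

Lemma lowest_entry_eq_col R R' i j :
  (forall l, R l j = R' l j) -> lowest_entry R i j -> lowest_entry R' i j.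
Proof. by move=> E [nz z]; split=> [|l il]; rewrite -E // z. Qed.

Section Pivots.
Variables (D R : 'M[F]_m) (P : {set pos m}).
Hypothesis HR : reduced_form D R P.

Lemma pivot_col_uniq i i' p : (i, p) \in P -> (i', p) \in P -> i = i'.
Proof. by move=> /(pivot_lowest HR) + /(pivot_lowest HR); apply: lowest_entry_uniq. Qed.

Lemma pivot_of_lowest_entry i j : lowest_entry R i j -> (i, j) \in P.
Proof.
move=> Hij; have [l Hl] : exists l, (l, j) \in P.
  apply/existsP; apply: contraT => /existsPn Hn.
  by case: Hij; rewrite (pivotless_col0 HR Hn i) eqxx.
by rewrite -(lowest_entry_uniq (pivot_lowest HR Hl) Hij).
Qed.

Lemma lowest_entry_off_pivot_row i p j :
  (i, p) \in P -> p != j -> ~ lowest_entry R i j.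
Proof.
by move=> Hp npj /pivot_of_lowest_entry Hj; rewrite (pivot_row_uniq HR Hp Hj) eqxx in npj.
Qed.

Lemma pivot_comb_lowest (c : 'I_m -> F) p0 :
  c p0 != 0 -> (forall p, c p != 0 -> exists i, (i, p) \in P) ->
  exists p i, [/\ (i, p) \in P, c p != 0, \sum_q c q * R i q != 0 &
                 forall l : 'I_m, (i < l)%N -> \sum_q c q * R l q = 0].
Proof.
move=> cp0 Hsupp; have [i0 Hi0] := Hsupp p0 cp0.
have : (i0, p0) \in [pred ip : pos m | (ip \in P) && (c ip.2 != 0)] by rewrite inE Hi0.
case/(arg_maxnP (fun ip : pos m => val ip.1)) => -[i p] /andP [/= Hp cp] Hmax.
have below q k : (k, q) \in P -> c q != 0 -> q != p -> (k < i)%N.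
  move=> Hq cq nqp; rewrite ltn_neqAle (Hmax (k, q)) ?inE ?Hq ?cq // andbT.
  by apply: contra nqp => /eqP/val_inj ek; rewrite ek in Hq; rewrite (pivot_row_uniq HR Hq Hp).
have other0 (l : 'I_m) q : (i <= l)%N -> q != p -> c q * R l q = 0.
  move=> il nqp; have [->|cq] := eqVneq (c q) 0; first by rewrite mul0r.
  have [k Hk] := Hsupp q cq.
  by rewrite ((pivot_lowest HR Hk).2 l (leq_trans (below q k Hk cq nqp) il)) mulr0.
exists p, i; split=> // [|l il].
  rewrite (bigD1 p) //= big1 ?addr0 => [|q]; last exact: other0.
  by rewrite mulf_neq0 // (pivot_lowest HR Hp).1.
apply: big1 => q _; have [->|nqp] := eqVneq q p; last exact: other0 (ltnW il) nqp.
by rewrite ((pivot_lowest HR Hp).2 l il) mulr0.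
Qed.

End Pivots.

Section Uniqueness.
Variables (D R R' : 'M[F]_m) (P P' : {set pos m}).
Hypotheses (HR : reduced_form D R P) (HR' : reduced_form D R' P').

(* The difference of the two columns is a combination of earlier pivot
   columns; its lowest entry would be a lowest entry of one of the two
   columns in a row that already holds an earlier pivot. *)
Lemma reduced_form_col_eq (j : 'I_m) :
  (forall p : 'I_m, (p < j)%N ->
     (forall i, R i p = R' i p) /\ (forall i, ((i, p) \in P) = ((i, p) \in P'))) ->
  forall i, R i j = R' i j.
Proof.
move=> Hprev.
have [a Ea Ha] := reduced_cols HR j; have [b Eb Hb] := reduced_cols HR' j.
pose c p := a p - b p.
have Hv i : R i j - R' i j = \sum_p c p * R i p.
  rewrite Ea Eb opprD addrACA subrr add0r -sumrB; apply: eq_bigr => p _.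
  rewrite mulrBl; have [->|bp] := eqVneq (b p) 0; first by rewrite !mul0r.
  by rewrite (Hprev p (Hb p bp).1).1.
have Hsupp p : c p != 0 -> (p < j)%N /\ exists i, (i, p) \in P.
  move=> cp; have [ap|ap] := eqVneq (a p) 0; last first.
    by have [pj [i Hi _]] := Ha p ap; split=> //; exists i.
  have bp : b p != 0 by apply: contraNneq cp; rewrite /c ap => ->; rewrite subrr.
  by have [pj [i Hi _]] := Hb p bp; split=> //; exists i; rewrite (Hprev p pj).2.
suff c0 p : c p = 0.
  by move=> i; apply/eqP; rewrite -subr_eq0 Hv; apply/eqP/big1 => p _; rewrite c0 mul0r.
apply/eqP/negPn/negP => cp.
have [q [i [Hq cq vi vz]]] := pivot_comb_lowest HR cp (fun q cq => (Hsupp q cq).2).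
have qj := (Hsupp q cq).1; have nqj : q != j by rewrite neq_ltn qj.
rewrite -Hv in vi.
have {}vz (l : 'I_m) : (i < l)%N -> R l j - R' l j = 0 by rewrite Hv; apply: vz.
have [bq|bq] := eqVneq (b q) 0.
- have aq : a q != 0 by move: cq; rewrite /c bq subr0.
  have [_ [i0 Hi0 Z]] := Ha q aq; rewrite (pivot_col_uniq HR Hi0 Hq) in Z.
  have Hq' : (i, q) \in P' by rewrite -(Hprev q qj).2.
  apply: (lowest_entry_off_pivot_row HR' Hq' nqj).
  split=> [|l il]; first by move: vi; rewrite (Z i) // sub0r oppr_eq0.
  by move/eqP: (vz l il); rewrite (Z l (ltnW il)) sub0r oppr_eq0 => /eqP.
- have [_ [i0 Hi0 Z]] := Hb q bq; rewrite -(Hprev q qj).2 in Hi0.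
  rewrite (pivot_col_uniq HR Hi0 Hq) in Z.
  apply: (lowest_entry_off_pivot_row HR Hq nqj).
  split=> [|l il]; first by move: vi; rewrite (Z i) // subr0.
  by move: (vz l il); rewrite (Z l (ltnW il)) subr0.
Qed.

Lemma reduced_form_uniq : R = R' /\ P = P'.
Proof.
have H n (j : 'I_m) : (j < n)%N ->
    (forall i, R i j = R' i j) /\ (forall i, ((i, j) \in P) = ((i, j) \in P')).
  elim: n j => [//|n IH] j; rewrite ltnS leq_eqVlt => /orP [/eqP jn|]; last exact: IH.
  have Ej : forall i, R i j = R' i j by apply: reduced_form_col_eq => p; rewrite jn; apply: IH.
  split=> // i; apply/idP/idP => Hi.
    exact: (pivot_of_lowest_entry HR') (lowest_entry_eq_col Ej (pivot_lowest HR Hi)).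
  apply: (pivot_of_lowest_entry HR) (lowest_entry_eq_col _ (pivot_lowest HR' Hi)).
  by move=> l; rewrite Ej.
split; first by apply/matrixP => i j; apply: (H _ j (ltn_ord j)).1.
by apply/setP => -[i j]; apply: (H _ j (ltn_ord j)).2.
Qed.

End Uniqueness.

Lemma reduced_col_refl D P j : reduced_col D D P j.
Proof.
exists (fun _ => 0) => [i|p]; last by rewrite eqxx.
by rewrite big1 ?addr0 // => p _; rewrite mul0r.
Qed.

Section ColumnOperations.
Variables (D M M' : 'M[F]_m) (P P' : {set pos m}).
Hypotheses (sPP' : {subset P <= P'})
           (pivot_cols_fixed : forall k p, (k, p) \in P -> forall i, M' i p = M i p).

Lemma reduced_col_unchanged j :
  reduced_col D M P j -> (forall i, M' i j = M i j) -> reduced_col D M' P' j.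
Proof.
move=> [a Ea Ha] Ej; exists a => [i|p ap].
  rewrite Ej Ea; congr (_ + _); apply: eq_bigr => p _.
  have [->|ap] := eqVneq (a p) 0; first by rewrite !mul0r.
  by have [_ [k Hk _]] := Ha p ap; rewrite (pivot_cols_fixed Hk).
have [pj [k Hk Z]] := Ha p ap; split=> //; exists k; first exact: sPP'.
by move=> i ki; rewrite Ej Z.
Qed.

Lemma reduced_col_sub_pivot_col j p0 i0 (c : F) :
  reduced_col D M P j -> (forall i, M' i j = M i j - c * M i p0) ->
  (i0, p0) \in P' -> (p0 < j)%N -> (forall i, M' i p0 = M i p0) ->
  vanishes_from M' j i0 ->
  (forall k p, (k, p) \in P -> vanishes_from M j k -> vanishes_from M' j k) ->
  reduced_col D M' P' j.
Proof.
move=> [a Ea Ha] Ej Hp0 p0j Ep0 Z0 Zold.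
exists (fun p => a p - (p == p0)%:R * c) => [i|p].
  rewrite Ej Ea -addrA; congr (_ + _).
  have -> : \sum_p (a p - (p == p0)%:R * c) * M' i p =
            \sum_p a p * M i p - \sum_p (p == p0)%:R * (c * M i p).
    rewrite -sumrB; apply: eq_bigr => p _.
    have [->|np] := eqVneq p p0; first by rewrite Ep0 mulrBl mulrA.
    rewrite !mul0r !subr0; have [->|ap] := eqVneq (a p) 0; first by rewrite !mul0r.
    by have [_ [k Hk _]] := Ha p ap; rewrite (pivot_cols_fixed Hk).
  congr (_ - _); rewrite (bigD1 p0) //= big1 => [|p np]; last by rewrite (negPf np) mul0r.
  by rewrite eqxx mul1r addr0.
have [->|np] := eqVneq p p0; first by move=> _; split=> //; exists i0.
rewrite mul0r subr0 => ap; have [pj [k Hk Z]] := Ha p ap.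
by split=> //; exists k; [exact: sPP' | exact: Zold Hk Z].
Qed.

End ColumnOperations.

End ReducedForm.

Lemma unipotent_conj_mulmx (R : comUnitRingType) n (M N : 'M[R]_n) :
  N *m N = 0 -> N *m M = 0 -> invmx (1%:M - N) *m M *m (1%:M - N) = M *m (1%:M - N).
Proof.
move=> NN NM.
have inv1N : (1%:M - N) *m (1%:M + N) = 1%:M.
  by rewrite mulmxBl mul1mx mulmxDr mulmx1 NN addr0 addrK.
have [U _] := mulmx1_unit inv1N.
have -> : invmx (1%:M - N) = 1%:M + N by have := mulKmx U (1%:M + N); rewrite inv1N mulmx1.
by rewrite mulmxDl mul1mx NM addr0.
Qed.

Section Sweeping.
Variables (F : fieldType) (m : nat).
Implicit Types (M : 'M[F]_m) (P : {set pos m}).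

Definition block_support (J1 : {set 'I_m}) M :=
  forall i j, M i j != 0 -> [&& (i < j)%N, i \notin J1 & j \in J1].

Lemma prowP P i : [exists k, (i, k) \in P] -> (i, prow P i) \in P.
Proof. by rewrite /prow; case: pickP => [k //|H] /existsP [k]; rewrite H. Qed.

Lemma isa_markable_col_uniq r M P i i' j :
  isa_markable r M P (i, j) -> isa_markable r M P (i', j) -> i = i'.
Proof.
case/and3P => /= /eqP e1 _ _ /and3P [/= /eqP e2 _ _].
by apply: val_inj; apply/eqP; rewrite -(eqn_add2r r) -e1 -e2.
Qed.

Lemma isa_cob_facts r M P i b : isa_cob r M P (i, b) ->
  [/\ val b = (i + r)%N, M i b != 0, forall k, (k, b) \notin P & (i, prow P i) \in P].
Proof. by case/andP => /and3P [/= /eqP e nz /existsPn nc] /prowP. Qed.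

Lemma mulmx_isa_T_entry r M P a b :
  (M *m isa_T r M P) a b = M a b - \sum_(ij | isa_cob r M P ij)
     (M ij.1 ij.2 / M ij.1 (prow P ij.1)) * (M a (prow P ij.1) * (ij.2 == b)%:R).
Proof.
rewrite /isa_T mulmxBr mulmx1 !mxE; congr (_ - _).
under eq_bigr => k _ do rewrite summxE mulr_sumr.
rewrite exchange_big /=; apply: eq_bigr => ij _.
rewrite (bigD1 (prow P ij.1)) //= big1 ?addr0 => [|k nk]; rewrite !mxE.
  by rewrite eqxx /= eq_sym mulrCA.
by rewrite (negPf nk) /= !mulr0.
Qed.

Lemma mulmx_isa_T_nocob r M P b : (forall i, ~~ isa_cob r M P (i, b)) ->
  forall a, (M *m isa_T r M P) a b = M a b.
Proof.
move=> Hb a; rewrite mulmx_isa_T_entry big1 ?subr0 // => -[i j] /= Hc.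
by case: eqP => [ejb|_]; [move: (Hb i); rewrite -ejb Hc | rewrite !mulr0].
Qed.

Lemma mulmx_isa_T_cob r M P i b : isa_cob r M P (i, b) ->
  forall a, (M *m isa_T r M P) a b = M a b - (M i b / M i (prow P i)) * M a (prow P i).
Proof.
move=> Hc a; rewrite mulmx_isa_T_entry (bigD1 (i, b)) //= eqxx mulr1 big1 ?addr0 //.
move=> -[i' j] /= /andP [Hc' ne]; case: eqP => [ejb|_]; last by rewrite !mulr0.
rewrite ejb in Hc' ne; case/andP: Hc' => Hm' _.
by rewrite (isa_markable_col_uniq Hm' (proj1 (andP Hc))) eqxx in ne.
Qed.

(* The change-of-basis matrix only adds pivot columns (which lie in J1) to
   other columns; since the rows indexed by J1 vanish, conjugating by it is
   the same as multiplying by it on the right. *)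
Lemma isa_step_mulmx J1 r M P : block_support J1 M ->
  isa_step (M, P) r = (M *m isa_T r M P, P :|: [set ij | isa_primary r M P ij]).
Proof.
move=> HS; rewrite /isa_step /isa_T; congr (_, _); set N := \sum_(ij | _) _.
apply: unipotent_conj_mulmx.
  rewrite /N mulmx_suml; apply: big1 => -[i j] /= Hc.
  rewrite mulmx_sumr; apply: big1 => -[i' j'] /= /andP [_ Hr'].
  rewrite -scalemxAl -scalemxAr mul_delta_mx_0 ?scaler0 //; apply/eqP => ej.
  by have [_ _ /(_ i')] := isa_cob_facts Hc; rewrite ej (prowP Hr').
rewrite /N mulmx_suml; apply: big1 => -[i j] /= Hc; rewrite -scalemxAl.
have [_ nz _ _] := isa_cob_facts Hc; case/and3P: (HS _ _ nz) => _ _ jJ1.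
suff -> : delta_mx (prow P i) j *m M = 0 by rewrite scaler0.
apply/matrixP => a b; rewrite !mxE big1 // => k _; rewrite mxE.
have [->|nk] := eqVneq k j; last by rewrite andbF mul0r.
have [Mjb|nzjb] := eqVneq (M j b) 0; first by rewrite Mjb mulr0.
by case/and3P: (HS _ _ nzjb); rewrite jJ1.
Qed.

Section IncrementalSweeping.
Variables (D : 'M[F]_m) (J1 : {set 'I_m}).

(* [(j < i + r)%N] says that position [(i, j)] lies on one of the diagonals
   swept before iteration [r]. *)
Record isa_inv r M P : Prop := IsaInv {
  isa_support : block_support J1 M;
  isa_pivot : forall i j, (i, j) \in P -> (j < i + r)%N /\ lowest_entry M i j;
  isa_row_uniq : forall i p j, (i, p) \in P -> (i, j) \in P -> p = j;
  isa_swept : forall j, (forall i, (i, j) \notin P) ->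
                forall i : 'I_m, (j < i + r)%N -> M i j = 0;
  isa_reduced : forall j, reduced_col D M P j }.

Section IsaStep.
Variables (r : nat) (M : 'M[F]_m) (P : {set pos m}).
Hypothesis HI : isa_inv r M P.
Let M' := M *m isa_T r M P.
Let P' := P :|: [set ij | isa_primary r M P ij].

Lemma isa_pivot_col_fixed k p : (k, p) \in P -> forall a, M' a p = M a p.
Proof.
move=> Hk; apply: mulmx_isa_T_nocob => i; apply/negP => /isa_cob_facts [_ _ /(_ k)].
by rewrite Hk.
Qed.

Lemma isa_cob_vanishes i b : isa_cob r M P (i, b) -> vanishes_from M' b i.
Proof.
move=> Hc i'; have [eb nz nc Hp] := isa_cob_facts Hc.
have [_ [nzp zp]] := isa_pivot HI Hp.
rewrite /M' (mulmx_isa_T_cob Hc) leq_eqVlt => /orP [/eqP/val_inj <-|lt].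
  by rewrite divfK // subrr.
rewrite (zp _ lt) mulr0 subr0; apply: (isa_swept HI nc).
by rewrite eb ltn_add2r.
Qed.

Lemma isa_step_support : block_support J1 M'.
Proof.
have HS := isa_support HI; move=> a b.
have [/existsP [i Hc]|/existsPn Hn] := boolP [exists i, isa_cob r M P (i, b)]; last first.
  by rewrite /M' mulmx_isa_T_nocob //; apply: HS.
rewrite /M' (mulmx_isa_T_cob Hc) => nz; have [eb nzb _ Hp] := isa_cob_facts Hc.
have [Mab|nzab] := eqVneq (M a b) 0; last exact: HS.
have Map : M a (prow P i) != 0 by apply: contraNneq nz => ->; rewrite Mab mulr0 subrr.
have [lp _] := isa_pivot HI Hp.
case/and3P: (HS _ _ Map) => ap -> _; case/and3P: (HS _ _ nzb) => _ _ ->.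
by rewrite andbT (ltn_trans ap) // eb.
Qed.

Lemma isa_step_pivot i j : (i, j) \in P' -> (j < i + r.+1)%N /\ lowest_entry M' i j.
Proof.
rewrite inE => /orP [Hp|]; last rewrite inE.
  have [lt Hlow] := isa_pivot HI Hp; split; first by rewrite addnS ltnW.
  by apply: lowest_entry_eq_col Hlow => l; rewrite (isa_pivot_col_fixed Hp).
case/andP => Hm nr; case/and3P: (Hm) => /= /eqP e nz /existsPn nc.
have fixed l : M l j = M' l j.
  rewrite /M' mulmx_isa_T_nocob // => i'; apply/negP => /andP [Hm' Hr].
  by move: nr; rewrite (isa_markable_col_uniq Hm Hm') Hr.
split; first by rewrite e addnS.
apply: lowest_entry_eq_col fixed _; split=> // i' lt; apply: (isa_swept HI nc).
by rewrite e ltn_add2r.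
Qed.

Lemma isa_step_row_uniq i p j : (i, p) \in P' -> (i, j) \in P' -> p = j.
Proof.
rewrite !inE /isa_primary => /orP [Hp|/andP [Hmp nrp]] /orP [Hj|/andP [Hmj nrj]].
- exact: (isa_row_uniq HI Hp Hj).
- by case/negP: nrj; apply/existsP; exists p.
- by case/negP: nrp; apply/existsP; exists j.
- case/and3P: Hmp => /= /eqP ep _ _; case/and3P: Hmj => /= /eqP ej _ _.
  by apply: val_inj; rewrite /= ep ej.
Qed.

Lemma isa_step_swept j : (forall i, (i, j) \notin P') ->
  forall i : 'I_m, (j < i + r.+1)%N -> M' i j = 0.
Proof.
move=> Hn i lt; have nP k : (k, j) \notin P by apply: contra (Hn k); rewrite inE => ->.
have [/existsP [i0 Hc]|/existsPn Hnc] := boolP [exists i0, isa_cob r M P (i0, j)].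
  apply: (isa_cob_vanishes Hc); have [e _ _ _] := isa_cob_facts Hc.
  by move: lt; rewrite e addnS ltnS leq_add2r.
rewrite /M' mulmx_isa_T_nocob //; have [lt'|ge] := ltnP j (i + r).
  exact: (isa_swept HI nP).
apply/eqP/negPn/negP => nz.
have mk : isa_markable r M P (i, j).
  by apply/and3P; split=> //=; [rewrite eqn_leq ge andbT -ltnS -addnS | apply/existsPn].
have [Hr|nr] := boolP [exists k, (i, k) \in P].
  by move: (Hnc i); rewrite /isa_cob mk Hr.
by move: (Hn i); rewrite !inE /isa_primary mk nr orbT.
Qed.

Lemma isa_step_reduced j : reduced_col D M' P' j.
Proof.
have sPP' : {subset P <= P'} by move=> ij Hij; rewrite inE Hij.
have [/existsP [i0 Hc]|/existsPn Hnc] := boolP [exists i0, isa_cob r M P (i0, j)]; last first.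
  exact: (reduced_col_unchanged sPP' isa_pivot_col_fixed (isa_reduced HI j)
            (mulmx_isa_T_nocob Hnc)).
have [e nz _ Hp0] := isa_cob_facts Hc; have [lp [_ zp0]] := isa_pivot HI Hp0.
apply: (reduced_col_sub_pivot_col sPP' isa_pivot_col_fixed (isa_reduced HI j)
          (mulmx_isa_T_cob Hc)).
- exact: sPP' Hp0.
- by rewrite e.
- exact: isa_pivot_col_fixed Hp0.
- exact: isa_cob_vanishes Hc.
move=> k p Hk Z i' ki'.
have i0k : (i0 < k)%N by rewrite ltnNge; apply/negP => /Z Mi0; rewrite Mi0 eqxx in nz.
by rewrite /M' (mulmx_isa_T_cob Hc) (Z _ ki') (zp0 i' (leq_trans i0k ki')) mulr0 subr0.
Qed.

Lemma isa_inv_step : isa_inv r.+1 M' P'.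
Proof.
split; [exact: isa_step_support | exact: isa_step_pivot | exact: isa_step_row_uniq |
        exact: isa_step_swept | exact: isa_step_reduced].
Qed.

End IsaStep.

Lemma isa_inv_init : block_support J1 D -> isa_inv 1 D set0.
Proof.
move=> HS; split=> // [i j|i p j|j _ i|j]; rewrite ?inE //; last exact: reduced_col_refl.
rewrite addn1 ltnS => le; apply/eqP/negPn/negP => /HS /and3P [ij _ _].
by rewrite ltnNge le in ij.
Qed.

Lemma isa_inv_foldl n r M P : isa_inv r M P ->
  isa_inv (r + n) (foldl (@isa_step F m) (M, P) (iota r n)).1
                  (foldl (@isa_step F m) (M, P) (iota r n)).2.
Proof.
elim: n r M P => [|n IH] r M P HI; first by rewrite addn0.
have -> : foldl (@isa_step F m) (M, P) (iota r n.+1) =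
          foldl (@isa_step F m) (isa_step (M, P) r) (iota r.+1 n) by [].
by rewrite (isa_step_mulmx _ _ (isa_support HI)) -addSnnS; apply/IH/isa_inv_step.
Qed.

Lemma isa_inv_reduced_form r M P : (m <= r)%N -> isa_inv r M P -> reduced_form D M P.
Proof.
move=> mr HI; split;
  [by move=> i j /(isa_pivot HI) [] | | exact: isa_row_uniq HI | exact: isa_reduced HI].
move=> j Hn i; apply: (isa_swept HI Hn).
by rewrite (leq_trans (ltn_ord j)) // (leq_trans mr) // leq_addl.
Qed.

Lemma ISA_reduced_form : block_support J1 D -> reduced_form D (ISA D).1 (ISA D).2.
Proof.
move=> HS; apply: (@isa_inv_reduced_form (1 + m.-1)); first by case: m.
exact: isa_inv_foldl (isa_inv_init HS).
Qed.

End IncrementalSweeping.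

Definition zero_on_cols M (C : {set 'I_m}) := forall i j, j \in C -> M i j = 0.

Lemma mulmx_sub_col_entry M (Q : pred 'I_m) (c : 'I_m -> F) k a b :
  (M *m (1%:M - \sum_(j | Q j) c j *: delta_mx k j)) a b =
  M a b - (if Q b then c b else 0) * M a k.
Proof.
rewrite mulmxBr mulmx1 !mxE; congr (_ - _).
under eq_bigr => l _ do rewrite summxE mulr_sumr.
rewrite exchange_big /=.
under eq_bigr => j _.
  rewrite (bigD1 k) //= big1 ?addr0 => [|l nl]; last by rewrite !mxE (negPf nl) /= !mulr0.
  rewrite !mxE eqxx /=.
  over.
case: ifP => Qb.
  rewrite (bigD1 b) //= eqxx mulr1 big1 ?addr0; first by rewrite mulrC.
  by move=> j /andP [_ nb]; rewrite eq_sym (negPf nb) !mulr0.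
rewrite big1 ?mul0r // => j Qj.
by case: eqVneq => [ejb|]; [move: Qb; rewrite ejb Qj | rewrite !mulr0].
Qed.

Lemma rev_stepP M C P :
  (rev_step (M, C, P) = (M, C, P) /\ zero_on_cols M C) \/
  exists it jt, [/\ jt \in C, M it jt != 0,
    forall j, j \in C -> forall i : 'I_m, (it < i)%N -> M i j = 0,
    forall j, j \in C -> M it j != 0 -> (jt <= j)%N &
    rev_step (M, C, P) =
      (M *m (1%:M - \sum_(j in C | (jt < j)%N) (M it j / M it jt) *: delta_mx jt j),
       C :\ jt, P :|: [set (it, jt)])].
Proof.
rewrite /rev_step; case: pickP => [it /andP [rit /forallP Hmaxr]|Hn]; last first.
  left; split=> // i j jC; apply/eqP/negPn/negP => nz.
  have rc : rowC M C i by apply/existsP; exists j; rewrite jC.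
  case: (arg_maxnP (fun i : 'I_m => val i) rc) => i0 ri0 Hmax.
  have := Hn i0; rewrite /= ri0 => /negbT/negP[].
  by apply/forallP => i'; apply/implyP/Hmax.
case: pickP => [jt /and3P [jtC nzjt /forallP Hminc]|Hn]; last first.
  case/existsP: rit => j0 /andP [j0C nz0].
  have pj0 : (j0 \in C) && (M it j0 != 0) by rewrite j0C.
  case: (arg_minnP (P := fun j => (j \in C) && (M it j != 0)) (fun j : 'I_m => val j) pj0).
  move=> j1 /andP [j1C nz1] Hmin.
  have := Hn j1; rewrite /= j1C nz1 => /negbT/negP[].
  by apply/forallP => j'; apply/implyP/Hmin.
right; exists it, jt; split=> // [j jC i lt|j jC nz]; last first.
  by apply: (implyP (Hminc j)); rewrite jC.
apply/eqP/negPn/negP => nz; have : rowC M C i by apply/existsP; exists j; rewrite jC.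
by move/(implyP (Hmaxr i)); rewrite leqNgt lt.
Qed.

Section RevisedSweeping.
Variables (D : 'M[F]_m) (J1 : {set 'I_m}).

Record rev_inv M (C : {set 'I_m}) P : Prop := RevInv {
  rev_support : block_support J1 M;
  rev_pivot : forall i j, (i, j) \in P -> j \notin C /\ lowest_entry M i j;
  rev_row_uniq : forall i p j, (i, p) \in P -> (i, j) \in P -> p = j;
  rev_removed : forall j, j \notin C -> exists i, (i, j) \in P;
  rev_below_pivots : forall j i p, j \in C -> (i, p) \in P -> vanishes_from M j i;
  rev_reduced : forall j, reduced_col D M P j }.

Section RevStep.
Variables (M : 'M[F]_m) (C : {set 'I_m}) (P : {set pos m}) (it jt : 'I_m).
Hypotheses (HI : rev_inv M C P) (jtC : jt \in C) (nzjt : M it jt != 0).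
Hypothesis below_it : forall j, j \in C -> forall i : 'I_m, (it < i)%N -> M i j = 0.
Hypothesis jt_min : forall j, j \in C -> M it j != 0 -> (jt <= j)%N.
Let M' := M *m (1%:M - \sum_(j in C | (jt < j)%N) (M it j / M it jt) *: delta_mx jt j).
Let P' := P :|: [set (it, jt)].

Lemma rev_col_fixed b : ~~ ((b \in C) && (jt < b)%N) -> forall a, M' a b = M a b.
Proof. by move=> /negPf nb a; rewrite mulmx_sub_col_entry nb mul0r subr0. Qed.

Lemma rev_col_sub b : b \in C -> (jt < b)%N ->
  forall a, M' a b = M a b - (M it b / M it jt) * M a jt.
Proof. by move=> bC jtb a; rewrite mulmx_sub_col_entry bC jtb. Qed.

Lemma rev_jt_col_fixed a : M' a jt = M a jt.
Proof. by apply: rev_col_fixed; rewrite ltnn andbF. Qed.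

Lemma rev_pivot_col_fixed k p : (k, p) \in P -> forall a, M' a p = M a p.
Proof.
by move=> /(rev_pivot HI) [pC _]; apply: rev_col_fixed; rewrite (negPf pC).
Qed.

Lemma rev_cleared j : j \in C -> j != jt -> vanishes_from M' j it.
Proof.
move=> jC njt i'; rewrite leq_eqVlt => /orP [/eqP/val_inj <-|lt]; last first.
  have [jtj|njtj] := boolP (jt < j)%N; last by rewrite rev_col_fixed ?jC // (below_it jC lt).
  by rewrite rev_col_sub // (below_it jC lt) (below_it jtC lt) mulr0 subr0.
have [jtj|] := boolP (jt < j)%N; first by rewrite rev_col_sub // divfK // subrr.
move=> njtj; rewrite rev_col_fixed ?jC //; apply/eqP; apply: contraNT njt => nz.
by apply/eqP/val_inj/eqP; rewrite eqn_leq leqNgt njtj jt_min.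
Qed.

Lemma rev_step_support : block_support J1 M'.
Proof.
have HS := rev_support HI; move=> a b.
have [/andP [bC jtb]|nb] := boolP ((b \in C) && (jt < b)%N); last first.
  by rewrite rev_col_fixed //; apply: HS.
rewrite rev_col_sub // => nz; have [Mab|nzab] := eqVneq (M a b) 0; last exact: HS.
have nzajt : M a jt != 0 by apply: contraNneq nz => ->; rewrite Mab mulr0 subrr.
have nzb : M it b != 0 by apply: contraNneq nz => ->; rewrite !mul0r subr0 Mab.
case/and3P: (HS _ _ nzajt) => ajt -> _; case/and3P: (HS _ _ nzb) => _ _ ->.
by rewrite andbT (ltn_trans ajt jtb).
Qed.

Lemma rev_step_pivot i j : (i, j) \in P' -> j \notin C :\ jt /\ lowest_entry M' i j.
Proof.
rewrite !inE => /orP [Hp|/eqP [-> ->]]; last first.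
  split; first by rewrite eqxx.
  exact: lowest_entry_eq_col (fun l => esym (rev_jt_col_fixed l)) (conj nzjt (below_it jtC)).
have [jC Hlow] := rev_pivot HI Hp; split; first by rewrite (negPf jC) andbF.
by apply: lowest_entry_eq_col Hlow => l; rewrite (rev_pivot_col_fixed Hp).
Qed.

Lemma rev_step_row_uniq i p j : (i, p) \in P' -> (i, j) \in P' -> p = j.
Proof.
have jt_free q : (it, q) \notin P.
  by apply/negP => /(rev_below_pivots HI jtC) /(_ it (leqnn _)) /eqP; apply/negP.
rewrite !inE => /orP [Hp|/eqP [ei ep]] /orP [Hj|/eqP [ei' ej]].
- exact: (rev_row_uniq HI Hp Hj).
- by move: Hp; rewrite ei' (negPf (jt_free p)).
- by move: Hj; rewrite ei (negPf (jt_free j)).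
- by rewrite ep ej.
Qed.

Lemma rev_step_removed j : j \notin C :\ jt -> exists i, (i, j) \in P'.
Proof.
rewrite !inE negb_and negbK => /orP [/eqP ->|jC]; first by exists it; rewrite !inE eqxx orbT.
by have [i Hi] := rev_removed HI jC; exists i; rewrite inE Hi.
Qed.

Lemma rev_step_below_pivots j i p : j \in C :\ jt -> (i, p) \in P' -> vanishes_from M' j i.
Proof.
rewrite !inE => /andP [njt jC] /orP [Hp|/eqP [-> _]]; last exact: rev_cleared.
move=> i' le; have Z : vanishes_from M j i := rev_below_pivots HI jC Hp.
have [jtj|njtj] := boolP (jt < j)%N; last by rewrite rev_col_fixed ?jC // (Z i' le).
by rewrite rev_col_sub // (Z i' le) (rev_below_pivots HI jtC Hp le) mulr0 subr0.
Qed.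

Lemma rev_step_reduced j : reduced_col D M' P' j.
Proof.
have sPP' : {subset P <= P'} by move=> ij Hij; rewrite inE Hij.
have [/andP [jC jtj]|nj] := boolP ((j \in C) && (jt < j)%N); last first.
  exact: (reduced_col_unchanged sPP' rev_pivot_col_fixed (rev_reduced HI j)
            (rev_col_fixed nj)).
apply: (reduced_col_sub_pivot_col (i0 := it) sPP' rev_pivot_col_fixed (rev_reduced HI j)
          (rev_col_sub jC jtj)).
- by rewrite !inE eqxx orbT.
- exact: jtj.
- exact: rev_jt_col_fixed.
- by apply: rev_cleared; rewrite // neq_ltn jtj orbT.
move=> k p Hk Z i' ki'.
by rewrite rev_col_sub // (Z i' ki') (rev_below_pivots HI jtC Hk ki') mulr0 subr0.
Qed.

Lemma rev_inv_step : rev_inv M' (C :\ jt) P'.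
Proof.
split; [exact: rev_step_support | exact: rev_step_pivot | exact: rev_step_row_uniq |
        exact: rev_step_removed | exact: rev_step_below_pivots | exact: rev_step_reduced].
Qed.

End RevStep.

Lemma rev_inv_iter n M C P M' C' P' : rev_inv M C P ->
  iter n (@rev_step F m) (M, C, P) = (M', C', P') ->
  rev_inv M' C' P' /\ (zero_on_cols M' C' \/ (#|C'| + n <= #|C|)%N).
Proof.
move=> HI; elim: n M' C' P' => [|n IH] M' C' P' /=.
  by case=> <- <- <-; split=> //; right; rewrite addn0.
case: (iter n (@rev_step F m) (M, C, P)) (IH) => [[M1 C1] P1] /(_ _ _ _ erefl) [HI1 Hend].
have [[-> Z]|[it [jt [jtC nzjt below jt_min ->]]]] := rev_stepP M1 C1 P1.
  by case=> <- <- <-; split=> //; left.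
case=> <- <- <-; split; first exact: rev_inv_step.
case: Hend => [Z|le]; first by rewrite (Z it jt jtC) eqxx in nzjt.
by right; move: le; rewrite (cardsD1 jt C1) jtC add1n addnS -addSn.
Qed.

Lemma rev_inv_reduced_form M C P : rev_inv M C P -> zero_on_cols M C -> reduced_form D M P.
Proof.
move=> HI Z; split; [by move=> i j /(rev_pivot HI) [] | | exact: (rev_row_uniq HI) |
                     exact: (rev_reduced HI)].
move=> j Hn i; apply: Z; apply: contraT => /(rev_removed HI) [k].
by rewrite (negPf (Hn k)).
Qed.

Lemma Revised1_reduced_form : block_support J1 D ->
  reduced_form D (Revised1 D).1.1 (Revised1 D).2.
Proof.
move=> HS; rewrite /Revised1; case E: (iter m _ _) => [[R C] P] /=.
have HI0 : rev_inv D setT set0.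
  by split=> // [i j|i p j|j|j i p|j]; rewrite ?inE //; apply: reduced_col_refl.
have [HI [Z|]] := rev_inv_iter HI0 E; first exact: rev_inv_reduced_form HI Z.
rewrite cardsT card_ord -[X in (_ <= X)%N]add0n leq_add2r leqn0 cards_eq0 => /eqP C0.
by apply: rev_inv_reduced_form HI _ => i j; rewrite C0 inE.
Qed.

End RevisedSweeping.

End Sweeping.

Lemma connection_matrix1_support (F : fieldType) m (D : 'M[F]_m) J0 J1 :
  connection_matrix1 D J0 J1 -> block_support J1 D.
Proof.
move=> [[J01 _] [_ [_ Hsupp]]] i j /Hsupp /and3P [-> iJ0 ->]; rewrite andbT /=.
apply/negP => iJ1; have : i \in J0 :&: J1 by rewrite inE iJ0 iJ1.
by rewrite J01 inE.
Qed.

Theorem mainTheorem8 (F : fieldType) (m : nat) (D : 'M[F]_m)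
    (J0 J1 : {set 'I_m}) :
  connection_matrix1 D J0 J1 ->
  (Revised1 D).1.1 = (ISA D).1 /\ (Revised1 D).2 = (ISA D).2.
Proof.
move=> /connection_matrix1_support HS.
exact: reduced_form_uniq (Revised1_reduced_form HS) (ISA_reduced_form HS).
Qed.
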